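(* Let $k$ be an algebraically closed field of characteristic not $2$ and let $D(\Lambda_2)$ be the $k$-algebra generated by $x,X,g,G$ subject to $x^2=X^2=0$, $g^2=G^2=1$, $gG=Gg$, $gx=-xg$, $gX=-Xg$, $Gx=-xG$, $GX=-XG$, $xX+Xx=1-gG$. For $\alpha,\beta\in k$ not both zero let $H_{\alpha\beta}$ be the subalgebra of $D(\Lambda_2)$ generated by $g$, $G$ and $\alpha x+\beta X$. Then $D(\Lambda_2)$ is free as a left $H_{\alpha\beta}$-module. *)

From HB Require Import structures.
From mathcomp Require Import all_boot all_order all_algebra all_field.
Set Implicit Arguments. Unset Strict Implicit. Unset Printing Implicit Defensive.
Import Order.TTheory GRing.Theory Num.Theory.
Local Open Scope ring_scope.

Definition DL2_rel (R : ringType) (x X g G : R) : Prop :=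
  [/\ x * x = 0, X * X = 0, g * g = 1 & G * G = 1] /\
  [/\ g * G = G * g, g * x = - (x * g), g * X = - (X * g),
      G * x = - (x * G) & G * X = - (X * G)] /\
  x * X + X * x = 1 - g * G.

(* (A; x, X, g, G) is the k-algebra presented by generators x,X,g,G and the
   relations DL2_rel: the relations hold, A is generated (as a unital algebra)
   by x,X,g,G, and for every k-algebra B with elements satisfying the
   relations there is a k-algebra morphism A -> B sending generators to them
   (uniqueness follows from generation).  This is the universal property of
   the presented algebra, characterizing it up to isomorphism. *)
Definition is_DLambda2 (K : fieldType) (A : falgType K) (x X g G : A) : Prop :=
  [/\ DL2_rel x X g G,
      agenv (<[x]> + <[X]> + <[g]> + <[G]>)%VS = fullv &
      forall (B : algType K) (x' X' g' G' : B), DL2_rel x' X' g' G' ->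
        exists f : {lrmorphism A -> B},
          [/\ f x = x', f X = X', f g = g' & f G = G']].

(* A is free as a left module over the subalgebra H: it has a (finite) basis
   (e_i) over H, i.e. every a is uniquely a sum  \sum_i h_i * e_i, h_i in H.
   (A is finite dimensional, so a free module over H has a finite basis.) *)
Definition free_left_module (K : fieldType) (A : falgType K) (H : {vspace A}) : Prop :=
  exists (n : nat) (e : 'I_n -> A),
    (forall a : A, exists h : 'I_n -> A,
        (forall i, h i \in H) /\ a = \sum_(i < n) h i * e i) /\
    (forall h : 'I_n -> A, (forall i, h i \in H) ->
        \sum_(i < n) h i * e i = 0 -> forall i, h i = 0).

From HB Require Import structures.
From mathcomp Require Import all_boot all_order all_algebra all_field.
From mathcomp Require Import ring.
Import Order.TTheory GRing.Theory Num.Theory.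
Local Open Scope ring_scope.

(* By the symmetry x <-> X we may assume alpha != 0; put y := alpha x + beta X.
   H is spanned by the eight monomials y^a g^c G^d, and the relations move X, g, G
   and x = alpha^-1 (y - beta X) to the right past these monomials, so
   D(Lambda_2) = H + H X.  The sum is direct, since h X = 0 forces h = 0 for h in H:
   the universal property maps D(Lambda_2) to its 16-dimensional right regular
   representation, where the vectors e_0 (y^a g^c G^d X) are nonzero multiples of
   distinct basis vectors.  As X^2 = 0, (1, X) is then a basis over H. *)

Set Implicit Arguments.
Unset Strict Implicit.
Unset Printing Implicit Defensive.

Section Anticommutation.
Variable R : pzRingType.
Implicit Types s t g G : R.

Lemma anticommC s t : s * t = - (t * s) -> t * s = - (s * t).
Proof. by move->; rewrite opprK. Qed.

Lemma anticommX s t n :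
  s * t = - (t * s) -> s * t ^+ n = (-1) ^+ n * (t ^+ n * s).
Proof.
move=> st; elim: n => [|n IHn]; first by rewrite !expr0 !mul1r mulr1.
by rewrite exprSr mulrA IHn -!mulrA st !mulrN exprS mulN1r mulNr.
Qed.

Lemma anticomm_mono t g G (c d : nat) :
  t * g = - (g * t) -> t * G = - (G * t) ->
  t * (g ^+ c * G ^+ d) = (-1) ^+ (c + d)%N * (g ^+ c * G ^+ d * t).
Proof.
move=> tg tG; rewrite mulrA (anticommX c tg) -!mulrA (anticommX d tG) exprD -!mulrA.
by congr (_ * _); rewrite [g ^+ c * _]mulrA commr_sign -mulrA.
Qed.

End Anticommutation.

Lemma anticomm_lincomb (K : pzRingType) (A : algType K) (s u v : A) (a b : K) :
  u * s = - (s * u) -> v * s = - (s * v) ->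
  (a *: u + b *: v) * s = - (s * (a *: u + b *: v)).
Proof.
by move=> us vs; rewrite mulrDr mulrDl -!scalerAr -!scalerAl us vs !scalerN opprD.
Qed.

Section Relations.
Variables (R : nzRingType) (x X g G : R).
Hypothesis rel : DL2_rel x X g G.

Lemma DL2_xx : x * x = 0. Proof. by case: rel => -[]. Qed.
Lemma DL2_XX : X * X = 0. Proof. by case: rel => -[]. Qed.
Lemma DL2_gg : g * g = 1. Proof. by case: rel => -[]. Qed.
Lemma DL2_GG : G * G = 1. Proof. by case: rel => -[]. Qed.
Lemma DL2_gG : g * G = G * g. Proof. by case: rel => _ [[]]. Qed.
Lemma DL2_xg : x * g = - (g * x).
Proof. by case: rel => _ [[_ gx _ _ _] _]; apply: anticommC. Qed.
Lemma DL2_Xg : X * g = - (g * X).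
Proof. by case: rel => _ [[_ _ gX _ _] _]; apply: anticommC. Qed.
Lemma DL2_xG : x * G = - (G * x).
Proof. by case: rel => _ [[_ _ _ Gx _] _]; apply: anticommC. Qed.
Lemma DL2_XG : X * G = - (G * X).
Proof. by case: rel => _ [[_ _ _ _ GX] _]; apply: anticommC. Qed.
Lemma DL2_xX : x * X + X * x = 1 - g * G. Proof. by case: rel => _ []. Qed.

Lemma DL2_g_mono (c d : bool) : g * (g ^+ c * G ^+ d) = g ^+ (~~ c) * G ^+ d.
Proof. by case: c; rewrite ?expr0 ?expr1 ?mul1r // mulrA DL2_gg mul1r. Qed.

Lemma DL2_G_mono (c d : bool) : G * (g ^+ c * G ^+ d) = g ^+ c * G ^+ (~~ d).
Proof.
case: c; case: d; rewrite ?expr0 ?expr1 ?mul1r ?mulr1 ?DL2_GG -?DL2_gG //.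
by rewrite mulrA -DL2_gG -mulrA DL2_GG mulr1.
Qed.

End Relations.

Lemma DL2_rel_swap (R : nzRingType) (x X g G : R) :
  DL2_rel x X g G -> DL2_rel X x g G.
Proof.
by case=> -[xx XX gg GG] [[gG gx gX Gx GX] xX]; do !split; rewrite // addrC.
Qed.

Lemma is_DLambda2_swap (K : fieldType) (A : falgType K) (x X g G : A) :
  is_DLambda2 x X g G -> is_DLambda2 X x g G.
Proof.
case=> rel gen univ; split; first exact: DL2_rel_swap.
  by rewrite (addvC <[X]>%VS).
move=> B x' X' g' G' /DL2_rel_swap/univ[f [fx fX fg fG]].
by exists f.
Qed.

Lemma free_left_module_sqr0 (K : fieldType) (A : falgType K) (H : {vspace A}) (t : A) :
  t * t = 0 ->
  (forall a, exists u v, [/\ u \in H, v \in H & a = u + v * t]) ->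
  (forall h, h \in H -> h * t = 0 -> h = 0) ->
  free_left_module H.
Proof.
move=> tt span inj; exists 2%N, (fun i : 'I_2 => t ^+ i); split.
  move=> a; have [u [v [Hu Hv ->]]] := span a.
  exists (fun i : 'I_2 => if i == ord0 then u else v); split; first by move=> i; case: ifP.
  by rewrite !big_ord_recl big_ord0 /= expr0 expr1 mulr1 addr0.
move=> h Hh; rewrite !big_ord_recl big_ord0 /= expr0 expr1 mulr1 addr0 => h01.
have h0 : h ord0 = 0.
  apply: inj => //; have := congr1 (fun w => w * t) h01.
  by rewrite mulrDl -mulrA tt mulr0 addr0 mul0r.
have h1 : h (lift ord0 ord0) = 0 by apply: inj => //; rewrite -h01 h0 add0r.
by move=> i; case: (unliftP ord0 i) => [j|] ->; rewrite ?(ord1 j).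
Qed.

Section Model.
Variable k : fieldType.

(* Coordinates in the basis x^a X^b g^c G^d of D(Lambda_2), indexed by (a, b, c, d).
   rmul_t is right multiplication by t in these coordinates, as computed from the
   relations; e.g. X x = 1 - g G - x X gives the first case of rmul_x.  Since
   lfun_algType multiplies in diagrammatic order, (f * h) v = h (f v), the
   operators satisfy the relations themselves, not their opposites. *)
Definition mono := (bool * bool * bool * bool)%type.
Definition coords := {ffun mono -> k^o}.

Definition rmul_g (v : coords) : coords :=
  [ffun i : mono => let: (a, b, c, d) := i in v (a, b, ~~ c, d)].
Definition rmul_G (v : coords) : coords :=
  [ffun i : mono => let: (a, b, c, d) := i in v (a, b, c, ~~ d)].
Definition rmul_X (v : coords) : coords :=
  [ffun i : mono => let: (a, b, c, d) := i in
   if b then (-1) ^+ (c + d)%N * v (a, false, c, d) else 0].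
Definition rmul_x (v : coords) : coords :=
  [ffun i : mono => let: (a, b, c, d) := i in (-1) ^+ (c + d)%N *
   match a, b with
   | false, false => v (false, true, c, d) - v (false, true, ~~ c, ~~ d)
   | true, false => v (false, false, c, d) + v (true, true, c, d) - v (true, true, ~~ c, ~~ d)
   | true, true => - v (false, true, c, d)
   | false, true => 0
   end].

Lemma scaler_regularE (r : k) (u : k^o) : r *: u = r * u. Proof. by []. Qed.

Ltac coords_ring :=
  apply/ffunP=> -[[[[] []] []] []]; rewrite !ffunE /= ?ffunE /= ?scaler_regularE; ring.

Lemma rmul_g_linear : linear rmul_g. Proof. by move=> r u w; coords_ring. Qed.
Lemma rmul_G_linear : linear rmul_G. Proof. by move=> r u w; coords_ring. Qed.
Lemma rmul_X_linear : linear rmul_X. Proof. by move=> r u w; coords_ring. Qed.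
Lemma rmul_x_linear : linear rmul_x. Proof. by move=> r u w; coords_ring. Qed.

HB.instance Definition _ := GRing.isLinear.Build k coords coords _ rmul_g
  rmul_g_linear.
HB.instance Definition _ := GRing.isLinear.Build k coords coords _ rmul_G
  rmul_G_linear.
HB.instance Definition _ := GRing.isLinear.Build k coords coords _ rmul_X
  rmul_X_linear.
HB.instance Definition _ := GRing.isLinear.Build k coords coords _ rmul_x
  rmul_x_linear.

Lemma dim_coords_gt0 : (0 < dim coords)%N.
Proof. by rewrite /dim /= !card_prod card_bool. Qed.

Definition model := lfun_algType dim_coords_gt0.
Definition model_g : model := linfun rmul_g.
Definition model_G : model := linfun rmul_G.
Definition model_X : model := linfun rmul_X.
Definition model_x : model := linfun rmul_x.

Lemma model_mulE (f h : model) v : (f * h) v = h (f v).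
Proof. exact: comp_lfunE. Qed.

Ltac model_ring :=
  apply/lfunP=> v;
  rewrite ?(model_mulE, id_lfunE, add_lfunE, opp_lfunE, zero_lfunE, lfunE) /=;
  coords_ring.

Lemma model_rel : DL2_rel model_x model_X model_g model_G.
Proof. by split; [split|split; [split|]]; model_ring. Qed.

Definition unit_coords (q : mono) : coords := [ffun i => (i == q)%:R].

Lemma model_monoX_unit (al be : k) (a c d : bool) :
  ((al *: model_x + be *: model_X) ^+ a * (model_g ^+ c * model_G ^+ d) * model_X)
    (unit_coords (false, false, false, false)) =
  ((-1) ^+ (c + d)%N * al ^+ a) *: unit_coords (a, true, c, d).
Proof.
case: a; case: c; case: d;
  rewrite ?expr0 ?expr1 ?mul1r ?mulr1 ?(model_mulE, id_lfunE, add_lfunE, scale_lfunE, lfunE) /=;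
  coords_ring.
Qed.

End Model.

Section FreeOverH.
Variables (k : fieldType) (A : falgType k) (x X g G : A) (al be : k).
Hypotheses (hA : is_DLambda2 x X g G) (al_neq0 : al != 0).

Let rel : DL2_rel x X g G. Proof. by case: hA. Qed.

Let y := al *: x + be *: X.
Let H := agenv (<[g]> + <[G]> + <[y]>)%VS.

Lemma DL2_yg : y * g = - (g * y).
Proof. exact: anticomm_lincomb (DL2_xg rel) (DL2_Xg rel). Qed.

Lemma DL2_yG : y * G = - (G * y).
Proof. exact: anticomm_lincomb (DL2_xG rel) (DL2_XG rel). Qed.

Lemma DL2_yy : y * y = (al * be) *: (1 - g * G).
Proof.
rewrite mulrDr !mulrDl -!scalerAr -!scalerAl !scalerA (DL2_xx rel) (DL2_XX rel).
by rewrite !scaler0 add0r addr0 -(DL2_xX rel) scalerDr mulrC addrC.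
Qed.

Lemma DL2_Xy : X * y = al *: (1 - g * G) - y * X.
Proof.
rewrite mulrDr mulrDl -!scalerAr -!scalerAl (DL2_XX rel) !scaler0 !addr0.
by rewrite -(DL2_xX rel) scalerDr addrAC subrr add0r.
Qed.

Lemma gens_in_H : [/\ g \in H, G \in H & y \in H].
Proof.
have := sub_agenv (<[g]> + <[G]> + <[y]>)%VS.
by rewrite !subv_add -!memvE => /andP[/andP[-> ->] ->].
Qed.

Lemma mem1H : 1 \in H. Proof. by rewrite memvE sub1_agenv. Qed.

Lemma memHM u v : u \in H -> v \in H -> u * v \in H. Proof. exact: memvM. Qed.

Lemma memHX t (b : bool) : t \in H -> t ^+ b \in H.
Proof. by case: b => Ht; rewrite ?expr0 ?expr1 ?mem1H. Qed.

Definition hmono (p : bool * bool * bool) : A := y ^+ p.1.1 * (g ^+ p.1.2 * G ^+ p.2).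

Lemma hmono0 c d : hmono (false, c, d) = g ^+ c * G ^+ d.
Proof. by rewrite /hmono expr0 mul1r. Qed.

Lemma hmono1 c d : hmono (true, c, d) = y * (g ^+ c * G ^+ d).
Proof. by rewrite /hmono expr1. Qed.

Let Hspan := (\sum_p <[hmono p]>)%VS.

Lemma hmono_in_Hspan p : hmono p \in Hspan.
Proof. exact: subvP (sumv_sup p isT (subvv _)) _ (memv_line _). Qed.

Lemma HspanP h : h \in Hspan -> exists c : bool * bool * bool -> k, h = \sum_p c p *: hmono p.
Proof.
case/memv_sumP=> hs Hhs ->.
have /fin_all_exists[c Hc] p : exists r, hs p = r *: hmono p by apply/vlineP/Hhs.
by exists c; apply: eq_bigr => p _.
Qed.

Lemma line_mul_Hspan t (W : {vspace A}) :
  (forall p, t * hmono p \in W) -> (<[t]> * Hspan <= W)%VS.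
Proof.
move=> tW; apply/prodvP=> _ h /vlineP[r ->] /HspanP[c ->].
rewrite -scalerAl memvZ // mulr_sumr rpred_sum // => p _.
by rewrite -scalerAr memvZ.
Qed.

Lemma g_ypow (a : bool) : g * y ^+ a = (-1) ^+ a * (y ^+ a * g).
Proof. exact/anticommX/anticommC/DL2_yg. Qed.

Lemma G_ypow (a : bool) : G * y ^+ a = (-1) ^+ a * (y ^+ a * G).
Proof. exact/anticommX/anticommC/DL2_yG. Qed.

Lemma H_sub_Hspan : (H <= Hspan)%VS.
Proof.
apply: agenv_sub_modl.
  by rewrite -memvE; have := hmono_in_Hspan (false, false, false); rewrite hmono0 mulr1.
rewrite !prodvDl !subv_add !line_mul_Hspan // => -[[a c] d]; rewrite /hmono /= mulrA.
- case: a; last by rewrite expr0 mulr1 -hmono1 hmono_in_Hspan.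
  rewrite expr1 DL2_yy -scalerAl mulrBl mul1r -mulrA (DL2_G_mono rel) (DL2_g_mono rel).
  by rewrite memvZ // memvB // -hmono0 hmono_in_Hspan.
- by rewrite G_ypow -!mulrA (DL2_G_mono rel) rpredMsign (hmono_in_Hspan (a, c, ~~ d)).
- by rewrite g_ypow -!mulrA (DL2_g_mono rel) rpredMsign (hmono_in_Hspan (a, ~~ c, d)).
Qed.

Let S := (H + amulr X @: H)%VS.

Lemma memS u v : u \in H -> v \in H -> u + v * X \in S.
Proof.
move=> Hu Hv; have -> : v * X = amulr X v by rewrite lfunE.
by rewrite memv_add ?memv_img.
Qed.

Lemma memSP w : w \in S -> exists u v, [/\ u \in H, v \in H & w = u + v * X].
Proof. by case/memv_addP=> u Hu [_ /memv_imgP[v Hv ->] ->]; exists u, v; rewrite lfunE. Qed.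

Lemma X_mono (c d : bool) :
  X * (g ^+ c * G ^+ d) = (-1) ^+ (c + d)%N * (g ^+ c * G ^+ d * X).
Proof. exact: anticomm_mono (DL2_Xg rel) (DL2_XG rel). Qed.

Lemma X_hmono_in_S p : X * hmono p \in S.
Proof.
case: gens_in_H => Hg HG Hy.
case: p => -[[] c] d; rewrite ?hmono0 ?hmono1.
  rewrite mulrA DL2_Xy mulrBl -scalerAl mulrBl mul1r -mulrA (DL2_G_mono rel).
  rewrite (DL2_g_mono rel) -mulrA X_mono [y * _]mulrA commr_sign -mulrA !mulrA.
  rewrite -[- (_ * X)]mulNr; apply: memS.
    by rewrite memvZ // memvB // memHM ?memHX.
  by rewrite rpredN -!mulrA rpredMsign !memHM ?memHX.
rewrite X_mono mulrA -[X in X \in _]add0r.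
by apply: memS; rewrite ?mem0v // rpredMsign memHM ?memHX.
Qed.

Lemma mulH_in_S t w : t \in H -> w \in S -> t * w \in S.
Proof. by move=> Ht /memSP[u [v [Hu Hv ->]]]; rewrite mulrDr mulrA memS ?memHM. Qed.

Lemma mulXH_in_S h : h \in H -> X * h \in S.
Proof.
move=> /(subvP H_sub_Hspan)/HspanP[c ->]; rewrite mulr_sumr rpred_sum // => p _.
by rewrite -scalerAr memvZ ?X_hmono_in_S.
Qed.

Lemma mulX_in_S w : w \in S -> X * w \in S.
Proof.
case/memSP=> u [v [Hu Hv ->]]; rewrite mulrDr mulrA rpredD ?mulXH_in_S //.
have /memSP[u' [v' [Hu' Hv' ->]]] := mulXH_in_S Hv.
rewrite mulrDl -mulrA (DL2_XX rel) mulr0 addr0 -[X in X \in _]add0r.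
by apply: memS; rewrite ?mem0v.
Qed.

Lemma mulx_in_S w : w \in S -> x * w \in S.
Proof.
have x_def : x = al^-1 *: (y - be *: X) by rewrite addrK scalerA mulVf // scale1r.
move=> Sw; rewrite x_def -scalerAl memvZ // mulrBl -scalerAl rpredB ?memvZ ?mulX_in_S //.
by case: gens_in_H => _ _ Hy; rewrite mulH_in_S.
Qed.

Lemma S_full a : exists u v, [/\ u \in H, v \in H & a = u + v * X].
Proof.
apply: memSP; case: hA => _ gen _; rewrite (subvP (_ : fullv <= S)%VS) ?memvf //.
rewrite -gen; apply: agenv_sub_modl.
  by rewrite -memvE; have := memS mem1H (mem0v H); rewrite mul0r addr0.
have line_mul t : (forall w, w \in S -> t * w \in S) -> (<[t]> * S <= S)%VS.
  by move=> tS; apply/prodvP=> _ w /vlineP[r ->] Sw; rewrite -scalerAl memvZ ?tS.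
case: gens_in_H => Hg HG _.
rewrite !prodvDl !subv_add !line_mul // => w.
all: by first [exact: mulx_in_S | exact: mulX_in_S | apply: mulH_in_S].
Qed.

Lemma mulX_inj_H h : h \in H -> h * X = 0 -> h = 0.
Proof.
case: hA => _ _ /(_ _ _ _ _ _ (model_rel k))[f [fx fX fg fG]].
pose e0 := unit_coords k (false, false, false, false).
have f_hmonoX p : f (hmono p * X) e0 =
    ((-1) ^+ (p.1.2 + p.2)%N * al ^+ p.1.1) *: unit_coords k (p.1.1, true, p.1.2, p.2).
  case: p => -[a c] d; rewrite -(model_monoX_unit al be) /hmono !rmorphM !rmorphXn /=.
  by rewrite linearD !linearZ /= fx fX fg fG.
move=> /(subvP H_sub_Hspan)/HspanP[c ->] hX0.
suff c0 p : c p = 0 by apply: big1 => p _; rewrite c0 scale0r.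
have := congr1 (fun F : model k => F e0 (p.1.1, true, p.1.2, p.2)) (congr1 f hX0).
rewrite mulr_suml linear_sum /= sum_lfunE sum_ffunE (bigD1 p) //= big1 => [|q qp].
  rewrite -scalerAl linearZ /= scale_lfunE f_hmonoX !ffunE eqxx raddf0 zero_lfunE ffunE.
  rewrite !scaler_regularE mulr1 addr0 => /eqP; rewrite !mulf_eq0 signr_eq0 expf_eq0.
  by rewrite (negPf al_neq0) andbF !orbF => /eqP.
rewrite -scalerAl linearZ /= scale_lfunE f_hmonoX !ffunE.
suff /negPf-> : (p.1.1, true, p.1.2, p.2) != (q.1.1, true, q.1.2, q.2).
  by rewrite !scaler_regularE !mulr0.
case: p q qp => -[a1 c1] d1 [[a2 c2] d2] /=; apply: contra => /eqP[-> -> ->].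
by rewrite eqxx.
Qed.

Lemma free_left_module_H : free_left_module H.
Proof. exact: free_left_module_sqr0 (DL2_XX rel) S_full mulX_inj_H. Qed.

End FreeOverH.

Theorem mainTheorem5 (k : closedFieldType) (hchar : 2%N \notin [pchar k])
  (A : falgType k) (x X g G : A) (hA : is_DLambda2 x X g G)
  (alpha beta : k) (hab : (alpha != 0) || (beta != 0)) :
  free_left_module (agenv (<[g]> + <[G]> + <[alpha *: x + beta *: X]>)%VS).
Proof.
case/orP: hab => [alpha_neq0 | beta_neq0]; first exact: free_left_module_H.
by rewrite (addrC (alpha *: x)); apply: free_left_module_H (is_DLambda2_swap hA) _.
Qed.
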